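(* The Koszul dual operad of the operad of differential dendriform algebras of weight zero is the operad of diassociative algebras $(D,\dashv,\vdash)$ equipped with one linear operator $\partial:D\to D$ lying in the centroid and satisfying $\partial^2=0$, i.e. $\partial(a\ast b)=\partial(a)\ast b=a\ast\partial(b)$ for all $a,b\in D$ and $\ast\in\{\dashv,\vdash\}$, and $\partial\circ\partial=0$.
   Context: $\mathbf{k}$ is a commutative unital ring (a field for Koszul duality). The operad of differential dendriform algebras of weight zero is the (nonsymmetric, quadratic) operad generated by two binary operations $\prec,\succ$ and one unary operation $d$, subject to the dendriform relations $(a\prec b)\prec c=a\prec(b\prec c+b\succ c)$, $(a\succ b)\prec c=a\succ(b\prec c)$, $(a\prec b+a\succ b)\succ c=a\succ(b\succ c)$ and the Leibniz relations $d(a\prec b)=d(a)\prec b+a\prec d(b)$, $d(a\succ b)=d(a)\succ b+a\succ d(b)$. Koszul duality of operads is in the sense of Ginzburg–Kapranov/Loday–Vallette. A diassociative algebra is a $\mathbf{k}$-module $D$ with bilinear operations $\dashv,\vdash$ such that for all $a,b,c$: $(a\dashv b)\dashv c=a\dashv(b\dashv c)$, $(a\dashv b)\dashv c=a\dashv(b\vdash c)$, $(a\vdash b)\dashv c=a\vdash(b\dashv c)$, $(a\dashv b)\vdash c=a\vdash(b\vdash c)$, $(a\vdash b)\vdash c=a\vdash(b\vdash c)$. *)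

From HB Require Import structures.
From mathcomp Require Import all_boot all_algebra.
Set Implicit Arguments. Unset Strict Implicit. Unset Printing Implicit Defensive.
Import GRing.Theory.
Local Open Scope ring_scope.

Section QuadraticNS.
Variables (F : fieldType) (U B : finType).

(* Basis of the weight-2 part of the free ns operad F(E), E = k U (arity 1)
   (+) k B (arity 2), split by arity.
   arity 1 : (u, v)            stands for u o v
   arity 2 : inl (u, m)        stands for u o m         (u(a m b))
             inr (m, u, i)     stands for m o_i u,  i = false : slot 1
                                                     i = true  : slot 2
   arity 3 : (m, n, i)         stands for m o_i n   ((a n b) m c for slot 1,
                                                      a m (b n c) for slot 2) *)
Definition tree1 := (U * U)%type.
Definition tree2 := ((U * B) + (B * U * bool))%type.
Definition tree3 := (B * B * bool)%type.

Record qpres := QPres {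
  rel1 : seq (tree1 -> F);
  rel2 : seq (tree2 -> F);
  rel3 : seq (tree3 -> F) }.

(* Signs of the Loday-Vallette pairing  F(E)^(2) (x) F(E^v)^(2) -> k
   (with the Koszul signs coming from the operadic suspension: binary
   generators of E^v are even, unary ones odd). *)
Definition sgn1 (t : tree1) : F := 1.
Definition sgn2 (t : tree2) : F := if t is inl _ then 1 else -1.
Definition sgn3 (t : tree3) : F := if t.2 then -1 else 1.

Definition pairing (T : finType) (sgn : T -> F) (x y : T -> F) : F :=
  \sum_(t : T) sgn t * x t * y t.

Definition in_span (T : finType) (s : seq (T -> F)) (y : T -> F) : Prop :=
  exists c : 'I_(size s) -> F,
    forall t, y t = \sum_(i < size s) c i * nth (fun _ => 0) s i t.

Definition in_orth (T : finType) (sgn : T -> F) (s : seq (T -> F)) (y : T -> F)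
  : Prop := forall i : 'I_(size s), pairing sgn (nth (fun _ => 0) s i) y = 0.

(* [koszul_dual P Q]: the Koszul dual operad P^! = F(E^v)/(R^perp) of the
   quadratic ns operad P is the operad presented by Q, the generators of Q
   being identified with the dual basis of the generators of P.  Since the
   ideal is generated in weight 2, this amounts to R^perp = span(rel Q) in
   each arity. *)
Definition koszul_dual (P Q : qpres) : Prop :=
  (forall y, in_orth sgn1 (rel1 P) y <-> in_span (rel1 Q) y) /\
  (forall y, in_orth sgn2 (rel2 P) y <-> in_span (rel2 Q) y) /\
  (forall y, in_orth sgn3 (rel3 P) y <-> in_span (rel3 Q) y).

End QuadraticNS.

(* Concrete presentations: U = unit (d, resp. partial), B = bool with
   false = prec / dashv (left), true = succ / vdash (right). *)
Section Concrete.
Variable F : fieldType.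

Definition ev (T : finType) (t : T) : T -> F := fun s => (s == t)%:R.

Notation L := false.  Notation R := true.
Notation s1 := false. Notation s2 := true.

Definition dend_rel3 : seq (tree3 bool -> F) :=
  [:: (* (a<b)<c = a<(b<c) + a<(b>c) *)
      (fun t => ev (L, L, s1) t - ev (L, L, s2) t - ev (L, R, s2) t);
      (* (a>b)<c = a>(b<c) *)
      (fun t => ev (L, R, s1) t - ev (R, L, s2) t);
      (* (a<b)>c + (a>b)>c = a>(b>c) *)
      (fun t => ev (R, L, s1) t + ev (R, R, s1) t - ev (R, R, s2) t)].

Definition leibniz (m : bool) : tree2 unit bool -> F :=
  (* d(a m b) = d(a) m b + a m d(b) *)
  fun t => ev (inl (tt, m)) t - ev (inr (m, tt, s1)) t - ev (inr (m, tt, s2)) t.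

Definition DiffDend : qpres F unit bool :=
  QPres [::] [:: leibniz L; leibniz R] dend_rel3.

Definition dias_rel3 : seq (tree3 bool -> F) :=
  [:: (fun t => ev (L, L, s1) t - ev (L, L, s2) t);   (* (a-|b)-|c = a-|(b-|c) *)
      (fun t => ev (L, L, s1) t - ev (L, R, s2) t);   (* (a-|b)-|c = a-|(b|-c) *)
      (fun t => ev (L, R, s1) t - ev (R, L, s2) t);   (* (a|-b)-|c = a|-(b-|c) *)
      (fun t => ev (R, L, s1) t - ev (R, R, s2) t);   (* (a-|b)|-c = a|-(b|-c) *)
      (fun t => ev (R, R, s1) t - ev (R, R, s2) t)].  (* (a|-b)|-c = a|-(b|-c) *)

Definition centroid1 (m : bool) : tree2 unit bool -> F :=
  (* p(a m b) = p(a) m b *)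
  fun t => ev (inl (tt, m)) t - ev (inr (m, tt, s1)) t.
Definition centroid2 (m : bool) : tree2 unit bool -> F :=
  (* p(a) m b = a m p(b) *)
  fun t => ev (inr (m, tt, s1)) t - ev (inr (m, tt, s2)) t.

Definition DiasCentroidSq0 : qpres F unit bool :=
  QPres [:: ev (tt, tt)]                                   (* p o p = 0 *)
        [:: centroid1 L; centroid2 L; centroid1 R; centroid2 R]
        dias_rel3.

End Concrete.

(* The Loday-Vallette pairing of weight-2 trees is diagonal in the tree basis,
   so the orthogonal complement of the relations of a quadratic operad is a
   space of solutions of a small linear system.  The relations of
   diassociative algebras with a square-zero centroid operator are orthogonal
   to the dendriform and Leibniz relations, hence lie in the complement; and
   conversely each solution of the system is written explicitly as a linear
   combination of them.  In arity one there is no relation to dualise, and the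
   complement is the whole line spanned by [d o d], whose dual is [p o p = 0]. *)
From mathcomp Require Import all_boot all_algebra.
From mathcomp.algebra_tactics Require Import ring.
Set Implicit Arguments. Unset Strict Implicit. Unset Printing Implicit Defensive.
Import GRing.Theory.
Local Open Scope ring_scope.

Section Pairing.
Variables (F : fieldType) (T : finType) (sgn : T -> F).

Lemma pairing_ev (t : T) (y : T -> F) : pairing sgn (ev F t) y = sgn t * y t.
Proof.
rewrite /pairing (bigD1 t) //= big1 => [|s /negbTE st]; last by rewrite /ev st !mulr0 mul0r.
by rewrite /ev eqxx mulr1 addr0.
Qed.

Lemma pairingD (x1 x2 y : T -> F) :
  pairing sgn (fun t => x1 t + x2 t) y = pairing sgn x1 y + pairing sgn x2 y.
Proof. by rewrite /pairing -big_split; apply: eq_bigr => t _ /=; ring. Qed.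

Lemma pairingB (x1 x2 y : T -> F) :
  pairing sgn (fun t => x1 t - x2 t) y = pairing sgn x1 y - pairing sgn x2 y.
Proof. by rewrite /pairing -sumrB; apply: eq_bigr => t _; ring. Qed.

Lemma in_orth_nil (y : T -> F) : in_orth sgn [::] y.
Proof. by case. Qed.

Lemma in_span_ev_singleton (t : T) (y : T -> F) :
  (forall s : T, s = t) -> in_span [:: ev F t] y.
Proof.
move=> all_t; exists (fun _ => y t) => s.
by rewrite big_ord1 /= (all_t s) /ev eqxx mulr1.
Qed.

Lemma in_orth_span (r s : seq (T -> F)) (y : T -> F) :
  (forall (i : 'I_(size r)) (j : 'I_(size s)),
     pairing sgn (nth (fun _ => 0) r i) (nth (fun _ => 0) s j) = 0) ->
  in_span s y -> in_orth sgn r y.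
Proof.
move=> r_orth_s [c Hc] i; rewrite /pairing.
under eq_bigr => t _ do rewrite Hc mulr_sumr.
rewrite exchange_big big1 // => j _.
under eq_bigr => t _ do rewrite mulrCA.
by rewrite -mulr_sumr -[X in _ * X]/(pairing _ _ _) r_orth_s mulr0.
Qed.

End Pairing.

Section DiffDendDual.
Variable F : fieldType.

Lemma leibniz_orth_centroid
    (i : 'I_(size (rel2 (DiffDend F)))) (j : 'I_(size (rel2 (DiasCentroidSq0 F)))) :
  pairing (@sgn2 F unit bool) (nth (fun _ => 0) (rel2 (DiffDend F)) i)
    (nth (fun _ => 0) (rel2 (DiasCentroidSq0 F)) j) = 0.
Proof.
case: i j => [[|[|//]] ?] [[|[|[|[|//]]]] ?];
  rewrite /= /leibniz !pairingB !pairing_ev /centroid1 /centroid2 /ev /=; ring.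
Qed.

Lemma dend_orth_dias
    (i : 'I_(size (rel3 (DiffDend F)))) (j : 'I_(size (rel3 (DiasCentroidSq0 F)))) :
  pairing (@sgn3 F bool) (nth (fun _ => 0) (rel3 (DiffDend F)) i)
    (nth (fun _ => 0) (rel3 (DiasCentroidSq0 F)) j) = 0.
Proof.
case: i j => [[|[|[|//]]] ?] [[|[|[|[|[|//]]]]] ?];
  rewrite /= ?pairingB ?pairingD !pairing_ev /sgn3 /ev /=; ring.
Qed.

Lemma orth_leibniz_in_span_centroid (y : tree2 unit bool -> F) :
  in_orth (@sgn2 F unit bool) (rel2 (DiffDend F)) y ->
  in_span (rel2 (DiasCentroidSq0 F)) y.
Proof.
move=> y_orth.
have leibniz_eq m : y (inr (m, tt, false)) = - y (inl (tt, m)) - y (inr (m, tt, true)).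
  case: m; [have := y_orth (@Ordinal 2 1 isT) | have := y_orth (@Ordinal 2 0 isT)];
    rewrite /= /leibniz !pairingB !pairing_ev /= => orth_m;
    by apply: subr0_eq; rewrite -orth_m; ring.
exists (fun i => nth 0 [:: y (inl (tt, false)); - y (inr (false, tt, true));
                          y (inl (tt, true)); - y (inr (true, tt, true))] i) => t.
rewrite !big_ord_recr big_ord0 /= /centroid1 /centroid2 /ev.
by case: t => [[[] []]|[[[] []] []]] /=; rewrite ?leibniz_eq; ring.
Qed.

Lemma orth_dend_in_span_dias (y : tree3 bool -> F) :
  in_orth (@sgn3 F bool) (rel3 (DiffDend F)) y ->
  in_span (rel3 (DiasCentroidSq0 F)) y.
Proof.
move=> y_orth.
have := y_orth (@Ordinal 3 0 isT); have := y_orth (@Ordinal 3 1 isT);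
have := y_orth (@Ordinal 3 2 isT).
rewrite /= ?pairingB ?pairingD !pairing_ev /sgn3 /= => orth2 orth1 orth0.
have eq0 : y (false, false, false) = - y (false, false, true) - y (false, true, true).
  by apply: subr0_eq; rewrite -orth0; ring.
have eq1 : y (true, false, true) = - y (false, true, false).
  by apply: subr0_eq; rewrite -orth1; ring.
have eq2 : y (true, true, true) = - y (true, false, false) - y (true, true, false).
  by apply: subr0_eq; rewrite -orth2; ring.
exists (fun i => nth 0 [:: - y (false, false, true); - y (false, true, true);
                          y (false, true, false); y (true, false, false);
                          y (true, true, false)] i) => t.
rewrite !big_ord_recr big_ord0 /= /ev.
by case: t => [[[] []] []] /=; rewrite ?eq0 ?eq1 ?eq2; ring.
Qed.

End DiffDendDual.

Theorem proposition3p23 (F : fieldType) :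
  koszul_dual (DiffDend F) (DiasCentroidSq0 F).
Proof.
split; [|split] => y; split.
- by move=> _; apply: in_span_ev_singleton => -[[] []].
- by move=> _; apply: in_orth_nil.
- exact: orth_leibniz_in_span_centroid.
- exact/in_orth_span/leibniz_orth_centroid.
- exact: orth_dend_in_span_dias.
- exact/in_orth_span/dend_orth_dias.
Qed.
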